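(* Let $\varphi(z)=1+B_1z+B_2z^2+\cdots$ be as in the context and let $f(z)=z+\sum_{n\ge2}a_nz^n\in\mathcal S^*_\Sigma(\varphi)$. Then $|a_3-a_2^2|\le\dfrac{B_1}{2}$.
   Context: Let $\mathbb U=\{z\in\mathbb C:|z|<1\}$; $\mathcal A$ is the class of $f(z)=z+\sum_{n\ge2}a_nz^n$ analytic in $\mathbb U$; $\Sigma$ is the class of $f\in\mathcal A$ univalent in $\mathbb U$ whose inverse extends to an analytic univalent function $g=f^{-1}$ on $\mathbb U$. $F\prec G$ means $F=G\circ w$ for some analytic $w:\mathbb U\to\mathbb U$ with $w(0)=0$. $\varphi$ is analytic and univalent in $\mathbb U$ with $\Re\varphi>0$, $\varphi(0)=1$, $\varphi'(0)>0$, $\varphi(\mathbb U)$ starlike with respect to $1$ and symmetric with respect to the real axis, $\varphi(z)=1+B_1z+B_2z^2+\cdots$ with real $B_j$, $B_1>0$. $\mathcal S^*_\Sigma(\varphi)$ (bi-starlike of Ma–Minda type) is the set of $f\in\Sigma$ with $\frac{zf'(z)}{f(z)}\prec\varphi(z)$ and $\frac{wg'(w)}{g(w)}\prec\varphi(w)$, $g=f^{-1}$. *)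

From Stdlib Require Import Reals.
Open Scope R_scope.

Record Cpx : Type := mkC { Cre : R ; Cim : R }.

Definition C0 : Cpx := mkC 0 0.
Definition C1 : Cpx := mkC 1 0.
Definition Cadd (z w : Cpx) : Cpx := mkC (Cre z + Cre w) (Cim z + Cim w).
Definition Copp (z : Cpx) : Cpx := mkC (- Cre z) (- Cim z).
Definition Csub (z w : Cpx) : Cpx := Cadd z (Copp w).
Definition Cmul (z w : Cpx) : Cpx :=
  mkC (Cre z * Cre w - Cim z * Cim w) (Cre z * Cim w + Cim z * Cre w).
Definition Cnorm2 (z : Cpx) : R := Cre z * Cre z + Cim z * Cim z.
Definition Cinv (z : Cpx) : Cpx := mkC (Cre z / Cnorm2 z) (- Cim z / Cnorm2 z).
Definition Cdiv (z w : Cpx) : Cpx := Cmul z (Cinv w).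
Definition Cmod (z : Cpx) : R := sqrt (Cnorm2 z).
Definition Cconj (z : Cpx) : Cpx := mkC (Cre z) (- Cim z).
Definition RtoC (r : R) : Cpx := mkC r 0.
Fixpoint Cpow (z : Cpx) (n : nat) : Cpx :=
  match n with O => C1 | S m => Cmul z (Cpow z m) end.

Definition in_U (z : Cpx) : Prop := Cmod z < 1.

Fixpoint psum (a : nat -> Cpx) (z : Cpx) (N : nat) : Cpx :=
  match N with
  | O => a O
  | S M => Cadd (psum a z M) (Cmul (a (S M)) (Cpow z (S M)))
  end.

Definition sums (a : nat -> Cpx) (z L : Cpx) : Prop :=
  Un_cv (fun N => Cre (psum a z N)) (Cre L) /\
  Un_cv (fun N => Cim (psum a z N)) (Cim L).

(* F is analytic in U, with Taylor series sum a_n z^n at 0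
   (an analytic function on U is represented on all of U by its Taylor series at 0) *)
Definition repr (F : Cpx -> Cpx) (a : nat -> Cpx) : Prop :=
  forall z, in_U z -> sums a z (F z).

Definition univalent_U (F : Cpx -> Cpx) : Prop :=
  forall z1 z2, in_U z1 -> in_U z2 -> F z1 = F z2 -> z1 = z2.

(* coefficients of F' and of F(z)/z *)
Definition dcoef (a : nat -> Cpx) (n : nat) : Cpx := Cmul (RtoC (INR (S n))) (a (S n)).
Definition shift (a : nat -> Cpx) (n : nat) : Cpx := a (S n).

Definition subord (F G : Cpx -> Cpx) : Prop :=
  exists (w : Cpx -> Cpx) (c : nat -> Cpx),
    repr w c /\ c O = C0 /\
    (forall z, in_U z -> in_U (w z)) /\
    (forall z, in_U z -> F z = G (w z)).

(* z F'(z)/F(z) ≺ phi, where F has Taylor coefficients a with a_0 = 0;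
   z F'(z)/F(z) = F'(z) / (F(z)/z), with F(z)/z the series sum a_{n+1} z^n *)
Definition starlike_subord (a : nat -> Cpx) (phi : Cpx -> Cpx) : Prop :=
  exists fp h : Cpx -> Cpx,
    repr fp (dcoef a) /\ repr h (shift a) /\
    subord (fun z => Cdiv (fp z) (h z)) phi.

Definition MaMinda (phi : Cpx -> Cpx) (B : nat -> Cpx) : Prop :=
  repr phi B /\ univalent_U phi /\
  (forall z, in_U z -> 0 < Cre (phi z)) /\
  B O = C1 /\
  (forall j, Cim (B j) = 0) /\
  0 < Cre (B 1%nat) /\
  (* phi(U) starlike with respect to 1 *)
  (forall z t, in_U z -> 0 <= t <= 1 ->
     exists u, in_U u /\ phi u = Cadd C1 (Cmul (RtoC t) (Csub (phi z) C1))) /\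
  (* phi(U) symmetric with respect to the real axis *)
  (forall z, in_U z -> exists u, in_U u /\ phi u = Cconj (phi z)).

(* f in Sigma (normalized, univalent, inverse extends analytically and univalently to U),
   and f in S*_Sigma(phi) *)
Definition bi_starlike (f : Cpx -> Cpx) (a : nat -> Cpx) (phi : Cpx -> Cpx) : Prop :=
  repr f a /\ a O = C0 /\ a 1%nat = C1 /\ univalent_U f /\
  starlike_subord a phi /\
  exists (g : Cpx -> Cpx) (b : nat -> Cpx),
    repr g b /\ univalent_U g /\
    (exists r, 0 < r /\ forall w, Cmod w < r -> in_U (g w) /\ f (g w) = w) /\
    starlike_subord b phi.

(* Write g = f^-1 with Taylor coefficients b, so that b_2 = -a_2 and b_3 = 2 a_2^2 - a_3.
   The subordinations z f'/f = phi o u and w g'/g = phi o v, with Schwarz functions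
   u = c_1 z + c_2 z^2 + ... and v = d_1 w + d_2 w^2 + ..., give
     a_2 = B_1 c_1,   2 a_3 = B_1 c_1 a_2 + B_1 c_2 + B_2 c_1^2,
   and the same identities for b with d.  Hence d_1 = -c_1 and 4 (a_3 - a_2^2) = B_1 (c_2 - d_2),
   while |c_2|, |d_2| <= 1 by the Cauchy estimate for self-maps of the disc, obtained here by
   averaging over roots of unity.  All coefficient identities are read off from second-order
   expansions of t |-> F(t) at t = 0 along the real axis, so no complex differentiation is needed. *)

From Pilot Require Import Defs.
From Stdlib Require Import Reals Lra Lia.
Open Scope R_scope.

(** * Complex arithmetic *)

Lemma Cext z w : Cre z = Cre w -> Cim z = Cim w -> z = w.
Proof. destruct z, w; simpl; intros; subst; reflexivity. Qed.

Ltac Cunfold := unfold Csub, Cadd, Copp, Cmul, RtoC, C0, Defs.C1, Cconj in *; simpl in *.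
Ltac Cring := apply Cext; Cunfold; ring.
Ltac Csplit E := pose proof (f_equal Cre E); pose proof (f_equal Cim E); Cunfold.

Lemma Cmod_RtoC t : Cmod (RtoC t) = Rabs t.
Proof.
  unfold Cmod, Cnorm2, RtoC; simpl.
  replace (t * t + 0 * 0) with (Rsqr t) by (unfold Rsqr; ring).
  apply sqrt_Rsqr_abs.
Qed.

Lemma Cmod_C0 : Cmod C0 = 0.
Proof. replace C0 with (RtoC 0) by reflexivity. rewrite Cmod_RtoC. apply Rabs_R0. Qed.

Lemma in_U_C0 : in_U C0.
Proof. unfold in_U; rewrite Cmod_C0; lra. Qed.

Lemma in_U_RtoC t : Rabs t < 1 -> in_U (RtoC t).
Proof. unfold in_U; rewrite Cmod_RtoC; auto. Qed.

Lemma Cnorm2_ge0 z : 0 <= Cnorm2 z.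
Proof. unfold Cnorm2; nra. Qed.

Lemma Cnorm2_mul z w : Cnorm2 (Cmul z w) = Cnorm2 z * Cnorm2 w.
Proof. unfold Cnorm2; Cunfold; ring. Qed.

Lemma Cmod_ge0 z : 0 <= Cmod z.
Proof. apply sqrt_pos. Qed.

Lemma Cmod_mul z w : Cmod (Cmul z w) = Cmod z * Cmod w.
Proof. unfold Cmod; rewrite Cnorm2_mul; apply sqrt_mult; apply Cnorm2_ge0. Qed.

Lemma Cre_le_Cmod z : Cre z <= Cmod z.
Proof.
  unfold Cmod, Cnorm2. eapply Rle_trans; [apply Rle_abs|].
  rewrite <- sqrt_Rsqr_abs. apply sqrt_le_1; unfold Rsqr; nra.
Qed.

Lemma Cpow_RtoC x n : Cpow (RtoC x) n = RtoC (x ^ n).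
Proof. induction n; simpl; [|rewrite IHn]; Cring. Qed.

Lemma Cpow_scale r u j : Cpow (Cmul (RtoC r) u) j = Cmul (RtoC (r ^ j)) (Cpow u j).
Proof. induction j; simpl; [|rewrite IHj]; Cring. Qed.

Lemma Cdiv_mul x y : Cnorm2 y <> 0 -> Cmul (Cdiv x y) y = x.
Proof. intros Hy. unfold Cdiv, Cinv, Cnorm2 in *. apply Cext; Cunfold; field; auto. Qed.

(* The l1 norm |Re z| + |Im z| dominates Cmod and avoids square roots in estimates. *)
Definition Cnorm1 z := Rabs (Cre z) + Rabs (Cim z).

Lemma Cnorm1_ge0 z : 0 <= Cnorm1 z.
Proof. unfold Cnorm1; pose proof (Rabs_pos (Cre z)); pose proof (Rabs_pos (Cim z)); lra. Qed.

Lemma Rabs_Cre_le_Cnorm1 z : Rabs (Cre z) <= Cnorm1 z.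
Proof. unfold Cnorm1; pose proof (Rabs_pos (Cim z)); lra. Qed.

Lemma Rabs_Cim_le_Cnorm1 z : Rabs (Cim z) <= Cnorm1 z.
Proof. unfold Cnorm1; pose proof (Rabs_pos (Cre z)); lra. Qed.

Lemma Cnorm1_add z w : Cnorm1 (Cadd z w) <= Cnorm1 z + Cnorm1 w.
Proof.
  unfold Cnorm1; Cunfold.
  pose proof (Rabs_triang (Cre z) (Cre w)); pose proof (Rabs_triang (Cim z) (Cim w)); lra.
Qed.

Lemma Cnorm1_mul z w : Cnorm1 (Cmul z w) <= Cnorm1 z * Cnorm1 w.
Proof.
  destruct z as [a b], w as [c d]; unfold Cnorm1; Cunfold.
  pose proof (Rabs_triang (a * c) (- (b * d))); pose proof (Rabs_triang (a * d) (b * c)).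
  rewrite Rabs_Ropp, !Rabs_mult in *.
  pose proof (Rabs_pos a); pose proof (Rabs_pos b); pose proof (Rabs_pos c); pose proof (Rabs_pos d).
  unfold Rminus; nra.
Qed.

Lemma Cnorm1_RtoC t : Cnorm1 (RtoC t) = Rabs t.
Proof. unfold Cnorm1; Cunfold; rewrite Rabs_R0; lra. Qed.

Lemma Cnorm1_pow z n : Cnorm1 (Cpow z n) <= Cnorm1 z ^ n.
Proof.
  induction n; simpl.
  - replace Defs.C1 with (RtoC 1) by reflexivity. rewrite Cnorm1_RtoC, Rabs_R1; lra.
  - eapply Rle_trans; [apply Cnorm1_mul|].
    apply Rmult_le_compat_l; [apply Cnorm1_ge0 | exact IHn].
Qed.

Lemma Cmod_le_Cnorm1 z : Cmod z <= Cnorm1 z.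
Proof.
  unfold Cmod, Cnorm2, Cnorm1.
  pose proof (Rabs_pos (Cre z)); pose proof (Rabs_pos (Cim z)).
  rewrite <- (sqrt_square (Rabs (Cre z) + Rabs (Cim z))) by lra.
  apply sqrt_le_1; [nra | nra |].
  pose proof (Rsqr_abs (Cre z)); pose proof (Rsqr_abs (Cim z)); unfold Rsqr in *; nra.
Qed.

Lemma in_U_Cnorm1 z : Cnorm1 z < 1 -> in_U z.
Proof. unfold in_U; pose proof (Cmod_le_Cnorm1 z); lra. Qed.

(** * Finite sums and limits *)

Fixpoint sumN (f : nat -> R) (n : nat) : R :=
  match n with O => 0 | S m => sumN f m + f m end.

Lemma sumN_ext f g n : (forall i, f i = g i) -> sumN f n = sumN g n.
Proof. intros H; induction n; simpl; [|rewrite IHn, H]; ring. Qed.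

Lemma sumN_le f g n : (forall i, f i <= g i) -> sumN f n <= sumN g n.
Proof. intros H; induction n; simpl; [lra|]. specialize (H n); lra. Qed.

Lemma sumN_const c n : sumN (fun _ => c) n = INR n * c.
Proof. induction n; simpl sumN; [simpl; ring|]. rewrite IHn, S_INR; ring. Qed.

Lemma sumN_plus f g n : sumN (fun i => f i + g i) n = sumN f n + sumN g n.
Proof. induction n; simpl; [|rewrite IHn]; ring. Qed.

Lemma sumN_lin a b f g n : sumN (fun i => a * f i - b * g i) n = a * sumN f n - b * sumN g n.
Proof. induction n; simpl; [|rewrite IHn]; ring. Qed.

Lemma sumN_le_const f b n : (forall i, f i <= b) -> sumN f n <= INR n * b.
Proof. intros H; rewrite <- sumN_const; apply sumN_le; auto. Qed.

Lemma sumN_ge_const f b n : (forall i, b <= f i) -> INR n * b <= sumN f n.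
Proof. intros H; rewrite <- sumN_const; apply sumN_le; auto. Qed.

Definition geom_tail (x : R) (p j : nat) : R := if Nat.leb p j then x ^ j else 0.

Lemma sumN_geom_tail_le x p n : 0 <= x < 1 -> sumN (geom_tail x p) n <= x ^ p / (1 - x).
Proof.
  intros Hx.
  assert (Hid : sumN (geom_tail x p) n * (1 - x) = if Nat.leb p n then x ^ p - x ^ n else 0).
  { induction n; simpl.
    - destruct p; simpl; ring.
    - unfold geom_tail at 2. rewrite Rmult_plus_distr_r, IHn.
      destruct (Nat.leb_spec p n), (Nat.leb_spec p (S n)); try lia; try ring.
      replace p with (S n) by lia. simpl; ring. }
  apply (Rmult_le_reg_r (1 - x)); [lra|].
  unfold Rdiv. rewrite Rmult_assoc, Rinv_l, Rmult_1_r, Hid by lra.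
  pose proof (pow_le x n (proj1 Hx)); pose proof (pow_le x p (proj1 Hx)).
  destruct (Nat.leb p n); lra.
Qed.

Lemma cv_const c : Un_cv (fun _ => c) c.
Proof. intros e He; exists O; intros; unfold Rdist; rewrite Rminus_diag, Rabs_R0; lra. Qed.

Lemma cv_lin x y X Y al be : Un_cv x X -> Un_cv y Y ->
  Un_cv (fun n => al * x n + be * y n) (al * X + be * Y).
Proof. intros Hx Hy. apply CV_plus; apply CV_mult; auto; apply cv_const. Qed.

Lemma Un_cv_ext u v l : (forall n, u n = v n) -> Un_cv u l -> Un_cv v l.
Proof. intros H Hu e He. destruct (Hu e He) as [N HN]. exists N. intros n Hn. rewrite <- H. auto. Qed.

Lemma cv_sumN (g : nat -> nat -> R) (l : nat -> R) n :
  (forall i, Un_cv (g i) (l i)) -> Un_cv (fun M => sumN (fun i => g i M) n) (sumN l n).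
Proof. intros H; induction n; simpl; [apply cv_const | apply CV_plus; auto]. Qed.

Lemma cv_le_eventually u l b n0 : Un_cv u l -> (forall n, (n0 <= n)%nat -> u n <= b) -> l <= b.
Proof.
  intros Hu Hb. apply (Rle_cv_lim (Un := fun n => u (n + n0)%nat) (Vn := fun _ => b)).
  - intros n; apply Hb; lia.
  - exact (CV_shift' _ n0 _ Hu).
  - apply cv_const.
Qed.

Lemma cv_ge_eventually u l b n0 : Un_cv u l -> (forall n, (n0 <= n)%nat -> b <= u n) -> b <= l.
Proof.
  intros Hu Hb. apply (Rle_cv_lim (Un := fun _ => b) (Vn := fun n => u (n + n0)%nat)).
  - intros n; apply Hb; lia.
  - apply cv_const.
  - exact (CV_shift' _ n0 _ Hu).
Qed.

(** * Power series *)

Lemma coef_growth_bound F a r : repr F a -> 0 < r < 1 ->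
  exists M, forall n, Cnorm1 (a n) * r ^ n <= M.
Proof.
  intros HF Hr.
  destruct (HF (RtoC r)) as [Hre Him]; [apply in_U_RtoC; rewrite Rabs_pos_eq; lra|].
  destruct (maj_by_pos _ (exist _ _ Hre)) as [Mu [HMu0 HMu]].
  destruct (maj_by_pos _ (exist _ _ Him)) as [Mv [HMv0 HMv]].
  set (S := psum a (RtoC r)) in *.
  exists (2 * Mu + 2 * Mv). intros n.
  assert (Hdiff : exists p q, Rabs p <= Mu /\ Rabs q <= Mv /\
    Cre (a n) * r ^ n = Cre (S n) - p /\ Cim (a n) * r ^ n = Cim (S n) - q).
  { destruct n as [|m].
    - exists 0, 0. rewrite Rabs_R0. unfold S; simpl. repeat split; lra.
    - exists (Cre (S m)), (Cim (S m)). repeat split; auto.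
      + unfold S; simpl. rewrite Cpow_RtoC. Cunfold. ring.
      + unfold S; simpl. rewrite Cpow_RtoC. Cunfold. ring. }
  destruct Hdiff as [p [q [Hp [Hq [E1 E2]]]]].
  assert (Hrn : 0 <= r ^ n) by (apply pow_le; lra).
  unfold Cnorm1. rewrite Rmult_plus_distr_r.
  rewrite <- (Rabs_pos_eq (r ^ n)) by lra. rewrite <- !Rabs_mult, E1, E2.
  pose proof (Rabs_triang (Cre (S n)) (- p)); pose proof (Rabs_triang (Cim (S n)) (- q)).
  rewrite Rabs_Ropp in *. unfold Rminus. specialize (HMu n); specialize (HMv n). lra.
Qed.

Definition Cquad (x0 x1 x2 u : Cpx) : Cpx := Cadd x0 (Cadd (Cmul x1 u) (Cmul x2 (Cmul u u))).

Lemma psum_quad_remainder_le a z M N :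
  (forall n, Cnorm1 (a n) * (1/2) ^ n <= M) -> Cnorm1 z <= 1/4 -> (2 <= N)%nat ->
  Cnorm1 (Csub (psum a z N) (Cquad (a O) (a 1%nat) (a 2%nat) z)) <= 16 * M * Cnorm1 z ^ 3.
Proof.
  intros HM Hz HN. set (s := Cnorm1 z) in *.
  assert (Hs : 0 <= s) by apply Cnorm1_ge0.
  assert (HM0 : 0 <= M) by (specialize (HM O); pose proof (Cnorm1_ge0 (a O)); simpl in HM; lra).
  assert (Hterm : forall j, Cnorm1 (Cmul (a j) (Cpow z j)) <= M * (2 * s) ^ j).
  { intros j. eapply Rle_trans; [apply Cnorm1_mul|].
    eapply Rle_trans; [apply Rmult_le_compat_l; [apply Cnorm1_ge0 | apply Cnorm1_pow]|].
    fold s. replace (Cnorm1 (a j) * s ^ j) with ((Cnorm1 (a j) * (1/2) ^ j) * (2 * s) ^ j)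
      by (rewrite Rmult_assoc, <- Rpow_mult_distr; do 2 f_equal; field).
    apply Rmult_le_compat_r; [apply pow_le; lra | apply HM]. }
  assert (Hsum : forall k, Cnorm1 (Csub (psum a z (2 + k)) (Cquad (a O) (a 1%nat) (a 2%nat) z))
                           <= M * sumN (geom_tail (2 * s) 3) (S (2 + k))).
  { induction k.
    - replace (Csub _ _) with (RtoC 0) by (unfold Cquad; simpl; Cring).
      rewrite Cnorm1_RtoC, Rabs_R0. unfold geom_tail; simpl. lra.
    - replace (Csub (psum a z (2 + S k)) _)
        with (Cadd (Csub (psum a z (2 + k)) (Cquad (a O) (a 1%nat) (a 2%nat) z))
                   (Cmul (a (3 + k)%nat) (Cpow z (3 + k)))) by (simpl; Cring).
      eapply Rle_trans; [apply Cnorm1_add|].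
      replace (S (2 + S k)) with (S (3 + k)) by lia.
      change (sumN (geom_tail (2 * s) 3) (S (3 + k)))
        with (sumN (geom_tail (2 * s) 3) (3 + k) + geom_tail (2 * s) 3 (3 + k)).
      unfold geom_tail at 2. replace (Nat.leb 3 (3 + k)) with true by (symmetry; apply Nat.leb_le; lia).
      change (S (2 + k)) with (3 + k)%nat in IHk. specialize (Hterm (3 + k)%nat). lra. }
  replace N with (2 + (N - 2))%nat by lia.
  eapply Rle_trans; [apply Hsum|].
  eapply Rle_trans; [apply Rmult_le_compat_l; [lra | apply sumN_geom_tail_le; lra]|].
  apply (Rmult_le_reg_r (1 - 2 * s)); [lra|].
  unfold Rdiv. rewrite Rmult_assoc, Rmult_assoc, Rinv_l, Rmult_1_r by lra.
  assert (0 <= M * s ^ 3) by (apply Rmult_le_pos; [lra | apply pow_le; lra]).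
  replace ((2 * s) ^ 3) with (8 * s ^ 3) by ring. nra.
Qed.

Lemma repr_quad_remainder F a : repr F a -> exists K, 0 <= K /\
  forall z, Cnorm1 z <= 1/4 ->
  Cnorm1 (Csub (F z) (Cquad (a O) (a 1%nat) (a 2%nat) z)) <= K * Cnorm1 z ^ 3.
Proof.
  intros HF. destruct (coef_growth_bound F a (1/2) HF) as [M HM]; [lra|].
  assert (HM0 : 0 <= M) by (specialize (HM O); pose proof (Cnorm1_ge0 (a O)); simpl in HM; lra).
  exists (32 * M). split; [lra|]. intros z Hz.
  destruct (HF z) as [Hre Him]; [apply in_U_Cnorm1; lra|].
  set (P := Cquad (a O) (a 1%nat) (a 2%nat) z).
  assert (Hb : forall N, (2 <= N)%nat -> Cnorm1 (Csub (psum a z N) P) <= 16 * M * Cnorm1 z ^ 3)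
    by (intros; apply psum_quad_remainder_le; auto).
  assert (Rabs (Cre (Csub (F z) P)) <= 16 * M * Cnorm1 z ^ 3).
  { apply (cv_le_eventually (fun N => Rabs (Cre (Csub (psum a z N) P))) _ _ 2).
    - apply cv_cvabs. Cunfold. apply CV_minus; [exact Hre | apply cv_const].
    - intros N HN. eapply Rle_trans; [apply Rabs_Cre_le_Cnorm1 | auto]. }
  assert (Rabs (Cim (Csub (F z) P)) <= 16 * M * Cnorm1 z ^ 3).
  { apply (cv_le_eventually (fun N => Rabs (Cim (Csub (psum a z N) P))) _ _ 2).
    - apply cv_cvabs. Cunfold. apply CV_minus; [exact Him | apply cv_const].
    - intros N HN. eapply Rle_trans; [apply Rabs_Cim_le_Cnorm1 | auto]. }
  unfold Cnorm1 at 1. lra.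
Qed.

(** * Second-order expansions at 0 *)

Definition jet2 (f : R -> R) (x0 x1 x2 : R) : Prop :=
  exists d K, 0 < d /\ forall t, 0 < Rabs t < d ->
    Rabs (f t - (x0 + x1 * t + x2 * (t * t))) <= K * Rabs t ^ 3.

Lemma jet2_coef f x0 x1 x2 y0 y1 y2 :
  jet2 f x0 x1 x2 -> x0 = y0 -> x1 = y1 -> x2 = y2 -> jet2 f y0 y1 y2.
Proof. intros H -> -> ->; exact H. Qed.

Lemma eq0_of_le_linear a C d : 0 < d -> (forall t, 0 < t < d -> Rabs a <= C * t) -> a = 0.
Proof.
  intros Hd H. destruct (Req_dec a 0) as [|Ha]; auto. exfalso.
  assert (HA : 0 < Rabs a) by (apply Rabs_pos_lt; auto).
  set (C' := Rabs C + 1).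
  assert (HC' : 0 < C') by (unfold C'; pose proof (Rabs_pos C); lra).
  set (t := Rmin (d / 2) (Rabs a / (2 * C'))).
  assert (Ht1 : t <= d / 2) by apply Rmin_l.
  assert (Ht2 : C' * t <= Rabs a / 2).
  { replace (Rabs a / 2) with (C' * (Rabs a / (2 * C'))) by (field; lra).
    apply Rmult_le_compat_l; [lra | apply Rmin_r]. }
  assert (Ht0 : 0 < t) by (apply Rmin_glb_lt; [lra | apply Rdiv_lt_0_compat; lra]).
  specialize (H t ltac:(lra)).
  assert (C * t <= C' * t) by (unfold C'; pose proof (Rle_abs C); nra).
  lra.
Qed.

Lemma mul_pow_S_le K t n : 0 <= t <= 1 -> K * t ^ S n <= Rabs K * t.
Proof.
  intros Ht. assert (t ^ n <= 1) by (rewrite <- (pow1 n); apply pow_incr; lra).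
  pose proof (pow_le t n (proj1 Ht)). pose proof (Rabs_pos K).
  assert (K * (t * t ^ n) <= Rabs K * (t * t ^ n)) by (apply Rmult_le_compat_r; [nra | apply Rle_abs]).
  assert (Rabs K * (t * t ^ n) <= Rabs K * t) by (apply Rmult_le_compat_l; nra).
  simpl. lra.
Qed.

Lemma quad_O_cube_eq0 a b c d K : 0 < d ->
  (forall t, 0 < t < d -> Rabs (a + b * t + c * (t * t)) <= K * t ^ 3) ->
  a = 0 /\ b = 0 /\ c = 0.
Proof.
  intros Hd H. set (d' := Rmin d 1).
  assert (Hd' : 0 < d') by (apply Rmin_glb_lt; lra).
  assert (Hsmall : forall t, 0 < t < d' -> 0 < t < d /\ t <= 1)
    by (intros t Ht; pose proof (Rmin_l d 1); pose proof (Rmin_r d 1); unfold d' in *; lra).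
  pose proof (Rabs_pos b); pose proof (Rabs_pos c).
  assert (Ha : a = 0).
  { apply (eq0_of_le_linear a (Rabs b + Rabs c + Rabs K) d'); auto. intros t Ht.
    destruct (Hsmall t Ht) as [Htd Ht1]. specialize (H t Htd).
    pose proof (Rabs_triang (a + b * t + c * (t * t)) (- (b * t) + - (c * (t * t)))).
    pose proof (Rabs_triang (- (b * t)) (- (c * (t * t)))).
    rewrite !Rabs_Ropp, !Rabs_mult, (Rabs_pos_eq t) in * by lra.
    replace (a + b * t + c * (t * t) + (- (b * t) + - (c * (t * t)))) with a in * by ring.
    pose proof (mul_pow_S_le K t 2 ltac:(lra)).
    assert (Rabs c * (t * t) <= Rabs c * t) by (apply Rmult_le_compat_l; nra). lra. }
  subst a.
  assert (Hb : b = 0).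
  { apply (eq0_of_le_linear b (Rabs c + Rabs K) d'); auto. intros t Ht.
    destruct (Hsmall t Ht) as [Htd Ht1]. specialize (H t Htd).
    replace (0 + b * t + c * (t * t)) with (t * (b + c * t)) in H by ring.
    rewrite Rabs_mult, (Rabs_pos_eq t) in H by lra.
    assert (Rabs (b + c * t) <= K * t ^ 2) by (apply (Rmult_le_reg_l t); [lra|]; simpl in *; nra).
    pose proof (Rabs_triang (b + c * t) (- (c * t))).
    rewrite Rabs_Ropp, Rabs_mult, (Rabs_pos_eq t) in * by lra.
    replace (b + c * t + - (c * t)) with b in * by ring.
    pose proof (mul_pow_S_le K t 1 ltac:(lra)). lra. }
  subst b. repeat split; auto.
  apply (eq0_of_le_linear c K d'); auto. intros t Ht.
  destruct (Hsmall t Ht) as [Htd Ht1]. specialize (H t Htd).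
  replace (0 + 0 * t + c * (t * t)) with (c * (t * t)) in H by ring.
  rewrite Rabs_mult, (Rabs_pos_eq (t * t)) in H by nra.
  apply (Rmult_le_reg_r (t * t)); [nra|]. simpl in H. nra.
Qed.

Lemma jet2_unique f x0 x1 x2 y0 y1 y2 : jet2 f x0 x1 x2 -> jet2 f y0 y1 y2 ->
  x0 = y0 /\ x1 = y1 /\ x2 = y2.
Proof.
  intros [d1 [K1 [Hd1 H1]]] [d2 [K2 [Hd2 H2]]].
  assert (x0 - y0 = 0 /\ x1 - y1 = 0 /\ x2 - y2 = 0); [|lra].
  apply (quad_O_cube_eq0 _ _ _ (Rmin d1 d2) (K1 + K2)); [apply Rmin_glb_lt; lra|].
  intros t Ht. pose proof (Rmin_l d1 d2); pose proof (Rmin_r d1 d2).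
  assert (Hat : Rabs t = t) by (apply Rabs_pos_eq; lra).
  specialize (H1 t ltac:(lra)). specialize (H2 t ltac:(lra)). rewrite Hat in *.
  replace ((x0 - y0) + (x1 - y1) * t + (x2 - y2) * (t * t)) with
    ((f t - (y0 + y1 * t + y2 * (t * t))) + - (f t - (x0 + x1 * t + x2 * (t * t)))) by ring.
  eapply Rle_trans; [apply Rabs_triang|]. rewrite Rabs_Ropp. lra.
Qed.

Lemma jet2_perturb f g x0 x1 x2 :
  (exists d K, 0 < d /\ forall t, 0 < Rabs t < d -> Rabs (f t - g t) <= K * Rabs t ^ 3) ->
  jet2 g x0 x1 x2 -> jet2 f x0 x1 x2.
Proof.
  intros [d1 [K1 [Hd1 H1]]] [d2 [K2 [Hd2 H2]]].
  exists (Rmin d1 d2), (K1 + K2). split; [apply Rmin_glb_lt; lra|].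
  intros t Ht. pose proof (Rmin_l d1 d2); pose proof (Rmin_r d1 d2).
  specialize (H1 t ltac:(lra)). specialize (H2 t ltac:(lra)).
  replace (f t - (x0 + x1 * t + x2 * (t * t)))
    with ((f t - g t) + (g t - (x0 + x1 * t + x2 * (t * t)))) by ring.
  eapply Rle_trans; [apply Rabs_triang|]. lra.
Qed.

Lemma jet2_eq_near f g x0 x1 x2 :
  (exists d, 0 < d /\ forall t, 0 < Rabs t < d -> f t = g t) ->
  jet2 g x0 x1 x2 -> jet2 f x0 x1 x2.
Proof.
  intros [d [Hd H]]. apply jet2_perturb. exists d, 0. split; auto. intros t Ht.
  rewrite H, Rminus_diag, Rabs_R0 by auto. lra.
Qed.

Lemma jet2_ext f g x0 x1 x2 : (forall t, f t = g t) -> jet2 g x0 x1 x2 -> jet2 f x0 x1 x2.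
Proof. intros H. apply jet2_eq_near. exists 1. split; [lra | auto]. Qed.

Lemma jet2_const c : jet2 (fun _ => c) c 0 0.
Proof.
  exists 1, 0. split; [lra|]. intros t Ht.
  replace (c - (c + 0 * t + 0 * (t * t))) with 0 by ring. rewrite Rabs_R0; lra.
Qed.

Lemma jet2_lin f g x0 x1 x2 y0 y1 y2 al be : jet2 f x0 x1 x2 -> jet2 g y0 y1 y2 ->
  jet2 (fun t => al * f t + be * g t) (al * x0 + be * y0) (al * x1 + be * y1) (al * x2 + be * y2).
Proof.
  intros [d1 [K1 [Hd1 H1]]] [d2 [K2 [Hd2 H2]]].
  exists (Rmin d1 d2), (Rabs al * K1 + Rabs be * K2). split; [apply Rmin_glb_lt; lra|].
  intros t Ht. pose proof (Rmin_l d1 d2); pose proof (Rmin_r d1 d2).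
  specialize (H1 t ltac:(lra)). specialize (H2 t ltac:(lra)).
  replace (al * f t + be * g t - ((al * x0 + be * y0) + (al * x1 + be * y1) * t + (al * x2 + be * y2) * (t * t)))
    with (al * (f t - (x0 + x1 * t + x2 * (t * t))) + be * (g t - (y0 + y1 * t + y2 * (t * t)))) by ring.
  eapply Rle_trans; [apply Rabs_triang|]. rewrite !Rabs_mult.
  pose proof (Rabs_pos al); pose proof (Rabs_pos be).
  apply (Rmult_le_compat_l (Rabs al)) in H1; auto. apply (Rmult_le_compat_l (Rabs be)) in H2; auto.
  nra.
Qed.

Lemma Rabs_quad_le x0 x1 x2 t : Rabs t <= 1 ->
  Rabs (x0 + x1 * t + x2 * (t * t)) <= Rabs x0 + Rabs x1 + Rabs x2.
Proof.
  intros Ht. pose proof (Rabs_triang (x0 + x1 * t) (x2 * (t * t))).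
  pose proof (Rabs_triang x0 (x1 * t)). rewrite !Rabs_mult in *.
  pose proof (Rabs_pos x1); pose proof (Rabs_pos x2); pose proof (Rabs_pos t).
  assert (Rabs x1 * Rabs t <= Rabs x1 * 1) by (apply Rmult_le_compat_l; lra).
  assert (Rabs x2 * (Rabs t * Rabs t) <= Rabs x2 * 1) by (apply Rmult_le_compat_l; nra).
  lra.
Qed.

Lemma jet2_mul f g x0 x1 x2 y0 y1 y2 : jet2 f x0 x1 x2 -> jet2 g y0 y1 y2 ->
  jet2 (fun t => f t * g t) (x0 * y0) (x0 * y1 + x1 * y0) (x0 * y2 + x1 * y1 + x2 * y0).
Proof.
  intros [d1 [K1 [Hd1 H1]]] [d2 [K2 [Hd2 H2]]].
  set (A := Rabs x0 + Rabs x1 + Rabs x2). set (B := Rabs y0 + Rabs y1 + Rabs y2).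
  set (c3 := x1 * y2 + x2 * y1). set (c4 := x2 * y2).
  exists (Rmin (Rmin d1 d2) 1), (A * Rabs K2 + Rabs K1 * B + Rabs K1 * Rabs K2 + Rabs c3 + Rabs c4).
  split; [apply Rmin_glb_lt; [apply Rmin_glb_lt|]; lra|].
  intros t Ht. pose proof (Rmin_l (Rmin d1 d2) 1); pose proof (Rmin_r (Rmin d1 d2) 1).
  pose proof (Rmin_l d1 d2); pose proof (Rmin_r d1 d2).
  specialize (H1 t ltac:(lra)). specialize (H2 t ltac:(lra)).
  pose proof (Rabs_quad_le x0 x1 x2 t ltac:(lra)) as Hp.
  pose proof (Rabs_quad_le y0 y1 y2 t ltac:(lra)) as Hq.
  set (p := x0 + x1 * t + x2 * (t * t)) in *. set (q := y0 + y1 * t + y2 * (t * t)) in *.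
  set (e := f t - p) in *. set (e' := g t - q) in *.
  replace (f t * g t - (x0 * y0 + (x0 * y1 + x1 * y0) * t + (x0 * y2 + x1 * y1 + x2 * y0) * (t * t)))
    with (p * e' + e * q + e * e' + t ^ 3 * c3 + t ^ 4 * c4) by (unfold e, e', p, q, c3, c4; ring).
  pose proof (Rabs_triang (p * e' + e * q + e * e' + t ^ 3 * c3) (t ^ 4 * c4)).
  pose proof (Rabs_triang (p * e' + e * q + e * e') (t ^ 3 * c3)).
  pose proof (Rabs_triang (p * e' + e * q) (e * e')).
  pose proof (Rabs_triang (p * e') (e * q)).
  rewrite !Rabs_mult, <- !RPow_abs in *. set (T := Rabs t) in *.
  assert (HT3 : 0 < T ^ 3 <= 1) by (split; [apply pow_lt | simpl]; nra).
  assert (HT4 : T ^ 4 <= T ^ 3) by (simpl; nra).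
  assert (HK1 : Rabs e <= Rabs K1 * T ^ 3) by (pose proof (Rle_abs K1); nra).
  assert (HK2 : Rabs e' <= Rabs K2 * T ^ 3) by (pose proof (Rle_abs K2); nra).
  pose proof (Rabs_pos e); pose proof (Rabs_pos e'); pose proof (Rabs_pos p); pose proof (Rabs_pos q).
  pose proof (Rabs_pos K1); pose proof (Rabs_pos K2); pose proof (Rabs_pos c3); pose proof (Rabs_pos c4).
  assert (Rabs p * Rabs e' <= A * (Rabs K2 * T ^ 3)) by (apply Rmult_le_compat; auto).
  assert (Rabs e * Rabs q <= (Rabs K1 * T ^ 3) * B) by (apply Rmult_le_compat; auto).
  assert (Rabs e * Rabs e' <= (Rabs K1 * T ^ 3) * Rabs K2) by (apply Rmult_le_compat; nra).
  assert (T ^ 4 * Rabs c4 <= T ^ 3 * Rabs c4) by (apply Rmult_le_compat_r; auto).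
  nra.
Qed.

Lemma jet2_O_t f x1 x2 : jet2 f 0 x1 x2 ->
  exists d C, 0 < d /\ forall t, 0 < Rabs t < d -> Rabs (f t) <= C * Rabs t.
Proof.
  intros [d [K [Hd H]]]. exists (Rmin d 1), (Rabs x1 + Rabs x2 + Rabs K).
  split; [apply Rmin_glb_lt; lra|].
  intros t Ht. pose proof (Rmin_l d 1); pose proof (Rmin_r d 1).
  specialize (H t ltac:(lra)).
  pose proof (Rabs_triang (f t - (0 + x1 * t + x2 * (t * t))) (x1 * t + x2 * (t * t))).
  pose proof (Rabs_triang (x1 * t) (x2 * (t * t))).
  replace (f t - (0 + x1 * t + x2 * (t * t)) + (x1 * t + x2 * (t * t))) with (f t) in * by ring.
  rewrite !Rabs_mult in *. set (T := Rabs t) in *.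
  pose proof (Rabs_pos x1); pose proof (Rabs_pos x2).
  pose proof (mul_pow_S_le K T 2 ltac:(lra)).
  assert (Rabs x2 * (T * T) <= Rabs x2 * T) by (apply Rmult_le_compat_l; nra).
  lra.
Qed.

Lemma jet2_nonzero_near f x0 x1 x2 : jet2 f x0 x1 x2 -> x0 <> 0 ->
  exists d, 0 < d /\ forall t, 0 < Rabs t < d -> f t <> 0.
Proof.
  intros H Hx.
  assert (H' : jet2 (fun t => 1 * f t + (-1) * x0) 0 x1 x2).
  { eapply jet2_coef; [apply (jet2_lin _ _ _ _ _ _ _ _ 1 (-1) H (jet2_const x0)) | ring..]. }
  destruct (jet2_O_t _ _ _ H') as [d [C [Hd HC]]].
  assert (HA : 0 < Rabs x0) by (apply Rabs_pos_lt; auto).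
  set (C' := Rabs C + 1). assert (HC' : 0 < C') by (unfold C'; pose proof (Rabs_pos C); lra).
  exists (Rmin d (Rabs x0 / (2 * C'))). split; [apply Rmin_glb_lt; [lra | apply Rdiv_lt_0_compat; lra]|].
  intros t Ht Hf. pose proof (Rmin_l d (Rabs x0 / (2 * C'))); pose proof (Rmin_r d (Rabs x0 / (2 * C'))).
  specialize (HC t ltac:(lra)). rewrite Hf in HC.
  replace (1 * 0 + -1 * x0) with (- x0) in HC by ring. rewrite Rabs_Ropp in HC.
  assert (Rabs t * C' <= Rabs x0 / 2).
  { replace (Rabs x0 / 2) with (Rabs x0 / (2 * C') * C') by (field; lra).
    apply Rmult_le_compat_r; lra. }
  unfold C' in *. pose proof (Rle_abs C). nra.
Qed.

Definition Cjet2 (F : R -> Cpx) (x0 x1 x2 : Cpx) : Prop :=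
  jet2 (fun t => Cre (F t)) (Cre x0) (Cre x1) (Cre x2) /\
  jet2 (fun t => Cim (F t)) (Cim x0) (Cim x1) (Cim x2).

Lemma Cjet2_unique F x0 x1 x2 y0 y1 y2 : Cjet2 F x0 x1 x2 -> Cjet2 F y0 y1 y2 ->
  x0 = y0 /\ x1 = y1 /\ x2 = y2.
Proof.
  intros [A B] [C D].
  destruct (jet2_unique _ _ _ _ _ _ _ A C) as [? [? ?]].
  destruct (jet2_unique _ _ _ _ _ _ _ B D) as [? [? ?]].
  repeat split; apply Cext; auto.
Qed.

Lemma Cjet2_const c : Cjet2 (fun _ => c) c C0 C0.
Proof. split; apply jet2_const. Qed.

Lemma Cjet2_add F G x0 x1 x2 y0 y1 y2 : Cjet2 F x0 x1 x2 -> Cjet2 G y0 y1 y2 ->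
  Cjet2 (fun t => Cadd (F t) (G t)) (Cadd x0 y0) (Cadd x1 y1) (Cadd x2 y2).
Proof.
  intros [A B] [C D]. split.
  - eapply jet2_ext; [|eapply jet2_coef; [apply (jet2_lin _ _ _ _ _ _ _ _ 1 1 A C)|..]];
      [intros; Cunfold; ring | Cunfold; ring ..].
  - eapply jet2_ext; [|eapply jet2_coef; [apply (jet2_lin _ _ _ _ _ _ _ _ 1 1 B D)|..]];
      [intros; Cunfold; ring | Cunfold; ring ..].
Qed.

Lemma Cjet2_mul F G x0 x1 x2 y0 y1 y2 : Cjet2 F x0 x1 x2 -> Cjet2 G y0 y1 y2 ->
  Cjet2 (fun t => Cmul (F t) (G t)) (Cmul x0 y0) (Cadd (Cmul x0 y1) (Cmul x1 y0))
    (Cadd (Cadd (Cmul x0 y2) (Cmul x1 y1)) (Cmul x2 y0)).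
Proof.
  intros [A B] [C D]. split.
  - pose proof (jet2_lin _ _ _ _ _ _ _ _ 1 (-1) (jet2_mul _ _ _ _ _ _ _ _ A C)
                  (jet2_mul _ _ _ _ _ _ _ _ B D)) as J.
    eapply jet2_ext; [|eapply jet2_coef; [exact J|..]]; [intros; Cunfold; ring | Cunfold; ring ..].
  - pose proof (jet2_lin _ _ _ _ _ _ _ _ 1 1 (jet2_mul _ _ _ _ _ _ _ _ A D)
                  (jet2_mul _ _ _ _ _ _ _ _ B C)) as J.
    eapply jet2_ext; [|eapply jet2_coef; [exact J|..]]; [intros; Cunfold; ring | Cunfold; ring ..].
Qed.

Lemma Cjet2_eq_near F G x0 x1 x2 :
  (exists d, 0 < d /\ forall t, 0 < Rabs t < d -> F t = G t) ->
  Cjet2 G x0 x1 x2 -> Cjet2 F x0 x1 x2.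
Proof.
  intros [d [Hd H]] [A B].
  split; eapply jet2_eq_near; eauto; exists d; split; auto; intros t Ht; rewrite H; auto.
Qed.

Lemma Cjet2_perturb F G x0 x1 x2 :
  (exists d K, 0 < d /\ forall t, 0 < Rabs t < d -> Cnorm1 (Csub (F t) (G t)) <= K * Rabs t ^ 3) ->
  Cjet2 G x0 x1 x2 -> Cjet2 F x0 x1 x2.
Proof.
  intros [d [K [Hd H]]] [A B].
  split; eapply jet2_perturb; eauto; exists d, K; split; auto; intros t Ht.
  - eapply Rle_trans; [apply (Rabs_Cre_le_Cnorm1 (Csub (F t) (G t))) | auto].
  - eapply Rle_trans; [apply (Rabs_Cim_le_Cnorm1 (Csub (F t) (G t))) | auto].
Qed.

Lemma Cjet2_O_t F x1 x2 : Cjet2 F C0 x1 x2 -> exists d C, 0 < d /\ 0 <= C /\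
  forall t, 0 < Rabs t < d -> Cnorm1 (F t) <= C * Rabs t.
Proof.
  intros [A B].
  destruct (jet2_O_t _ _ _ A) as [d1 [C1 [Hd1 H1]]].
  destruct (jet2_O_t _ _ _ B) as [d2 [C2 [Hd2 H2]]].
  exists (Rmin d1 d2), (Rabs C1 + Rabs C2).
  split; [apply Rmin_glb_lt; lra|]. split; [pose proof (Rabs_pos C1); pose proof (Rabs_pos C2); lra|].
  intros t Ht. pose proof (Rmin_l d1 d2); pose proof (Rmin_r d1 d2).
  specialize (H1 t ltac:(lra)). specialize (H2 t ltac:(lra)).
  pose proof (Rle_abs C1); pose proof (Rle_abs C2); pose proof (Rabs_pos t).
  unfold Cnorm1. nra.
Qed.

Lemma Cjet2_repr F a : repr F a -> Cjet2 (fun t => F (RtoC t)) (a O) (a 1%nat) (a 2%nat).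
Proof.
  intros HF. destruct (repr_quad_remainder F a HF) as [K [HK H]].
  assert (G : forall t, 0 < Rabs t < 1/4 ->
    Cnorm1 (Csub (F (RtoC t)) (Cquad (a O) (a 1%nat) (a 2%nat) (RtoC t))) <= K * Rabs t ^ 3).
  { intros t Ht. rewrite <- Cnorm1_RtoC. apply H. rewrite Cnorm1_RtoC. lra. }
  split; exists (1/4), K; split; try lra; intros t Ht; eapply Rle_trans; try apply (G t Ht);
    eapply Rle_trans; [|apply Rabs_Cre_le_Cnorm1 | |apply Rabs_Cim_le_Cnorm1];
    unfold Cquad; Cunfold; right; f_equal; ring.
Qed.

Lemma Cjet2_Cquad u c1 c2 B0 B1 B2 : Cjet2 u C0 c1 c2 ->
  Cjet2 (fun t => Cquad B0 B1 B2 (u t)) B0 (Cmul B1 c1) (Cadd (Cmul B1 c2) (Cmul B2 (Cmul c1 c1))).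
Proof.
  intros Hu. unfold Cquad.
  pose proof (Cjet2_mul _ _ _ _ _ _ _ _ (Cjet2_const B1) Hu) as H1.
  pose proof (Cjet2_mul _ _ _ _ _ _ _ _ (Cjet2_const B2) (Cjet2_mul _ _ _ _ _ _ _ _ Hu Hu)) as H2.
  destruct (Cjet2_add _ _ _ _ _ _ _ _ (Cjet2_const B0) (Cjet2_add _ _ _ _ _ _ _ _ H1 H2)) as [A B].
  split; (eapply jet2_coef; [eassumption|..]); Cunfold; ring.
Qed.

Lemma Cjet2_comp Phi B u c1 c2 : repr Phi B -> Cjet2 u C0 c1 c2 ->
  Cjet2 (fun t => Phi (u t)) (B O) (Cmul (B 1%nat) c1)
    (Cadd (Cmul (B 1%nat) c2) (Cmul (B 2%nat) (Cmul c1 c1))).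
Proof.
  intros HP Hu. apply Cjet2_perturb with (G := fun t => Cquad (B O) (B 1%nat) (B 2%nat) (u t));
    [|apply Cjet2_Cquad; auto].
  destruct (repr_quad_remainder Phi B HP) as [K [HK H]].
  destruct (Cjet2_O_t _ _ _ Hu) as [d [C [Hd [HC Hs]]]].
  set (d' := 1 / (4 * (C + 1))). assert (Hd' : 0 < d') by (apply Rdiv_lt_0_compat; lra).
  exists (Rmin d d'), (K * C ^ 3). split; [apply Rmin_glb_lt; lra|].
  intros t Ht. pose proof (Rmin_l d d'); pose proof (Rmin_r d d').
  specialize (Hs t ltac:(lra)).
  assert (Hut : Cnorm1 (u t) <= 1/4).
  { apply Rle_trans with ((C + 1) * d'); [nra | unfold d'; right; field; lra]. }
  eapply Rle_trans; [apply H; auto|].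
  rewrite Rmult_assoc, <- Rpow_mult_distr.
  apply Rmult_le_compat_l; [lra|]. apply pow_incr. split; [apply Cnorm1_ge0 | lra].
Qed.

(** * Averaging over roots of unity *)

Definition cis (a : R) : Cpx := mkC (cos a) (sin a).

Lemma Cmod_cis a : Cmod (cis a) = 1.
Proof.
  unfold Cmod, Cnorm2, cis; simpl. rewrite <- sqrt_1. f_equal.
  pose proof (sin2_cos2 a). unfold Rsqr in *. lra.
Qed.

Lemma Cpow_cis a j : Cpow (cis a) j = cis (INR j * a).
Proof.
  induction j; simpl Cpow.
  - unfold cis. rewrite Rmult_0_l, cos_0, sin_0. reflexivity.
  - rewrite IHj, S_INR. unfold cis. replace ((INR j + 1) * a) with (a + INR j * a) by ring.
    rewrite cos_plus, sin_plus. Cring.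
Qed.

Lemma sumN_cos_mul phi N : 2 * sin (phi / 2) * sumN (fun k => cos (INR k * phi)) N
  = sin ((INR N - 1/2) * phi) + sin (phi / 2).
Proof.
  induction N; simpl sumN.
  - simpl INR. replace ((0 - 1/2) * phi) with (- (phi / 2)) by field. rewrite sin_neg. ring.
  - rewrite Rmult_plus_distr_l, IHN, S_INR.
    replace ((INR N + 1 - 1/2) * phi) with (INR N * phi + phi / 2) by field.
    replace ((INR N - 1/2) * phi) with (INR N * phi - phi / 2) by field.
    rewrite sin_plus, sin_minus. ring.
Qed.

Lemma sumN_sin_mul phi N : 2 * sin (phi / 2) * sumN (fun k => sin (INR k * phi)) N
  = cos (phi / 2) - cos ((INR N - 1/2) * phi).
Proof.
  induction N; simpl sumN.
  - simpl INR. replace ((0 - 1/2) * phi) with (- (phi / 2)) by field. rewrite cos_neg. ring.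
  - rewrite Rmult_plus_distr_l, IHN, S_INR.
    replace ((INR N + 1 - 1/2) * phi) with (INR N * phi + phi / 2) by field.
    replace ((INR N - 1/2) * phi) with (INR N * phi - phi / 2) by field.
    rewrite cos_plus, cos_minus. ring.
Qed.

Definition root_angle (N : nat) : R := 2 * PI / INR N.

Lemma INR_mul_root_angle N : (0 < N)%nat -> INR N * root_angle N = 2 * PI.
Proof. intros H. unfold root_angle. pose proof (lt_0_INR N H). field. lra. Qed.

Lemma sumN_roots_of_unity_eq0 N m : (0 < N)%nat -> sin (INR m * PI / INR N) <> 0 ->
  sumN (fun k => cos (INR k * (INR m * root_angle N))) N = 0 /\
  sumN (fun k => sin (INR k * (INR m * root_angle N))) N = 0.
Proof.
  intros HN Hs. set (phi := INR m * root_angle N).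
  pose proof (lt_0_INR N HN).
  assert (Hhalf : phi / 2 = INR m * PI / INR N) by (unfold phi, root_angle; field; lra).
  assert (Hend : (INR N - 1/2) * phi = - (phi / 2) + 2 * INR m * PI)
    by (unfold phi, root_angle; field; lra).
  pose proof (sumN_cos_mul phi N) as C. pose proof (sumN_sin_mul phi N) as S.
  rewrite Hend, sin_period, sin_neg in C. rewrite Hend, cos_period, cos_neg in S.
  rewrite Hhalf in C, S.
  split; apply (Rmult_eq_reg_l (2 * sin (INR m * PI / INR N))); lra.
Qed.

Lemma sin_mul_PI_div_neq0 N m : (0 < m < N \/ N < m < 2 * N)%nat -> sin (INR m * PI / INR N) <> 0.
Proof.
  intros Hm. pose proof PI_RGT_0.
  assert (HN : 0 < INR N) by (apply lt_0_INR; lia).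
  assert (Hx : INR m * PI / INR N * INR N = INR m * PI) by (field; lra).
  destruct Hm as [Hm | Hm].
  - assert (0 < INR m) by (apply lt_0_INR; lia). assert (INR m < INR N) by (apply lt_INR; lia).
    apply Rgt_not_eq, sin_gt_0; apply (Rmult_lt_reg_r (INR N)); auto; rewrite Hx; nra.
  - assert (INR N < INR m) by (apply lt_INR; lia).
    assert (INR m < 2 * INR N)
      by (replace 2 with (INR 2) by reflexivity; rewrite <- mult_INR; apply lt_INR; lia).
    apply Rlt_not_eq, sin_lt_0; apply (Rmult_lt_reg_r (INR N)); auto; rewrite Hx; nra.
Qed.

Definition sample_point (r : R) (N k : nat) : Cpx := Cmul (RtoC r) (cis (INR k * root_angle N)).

(* [Re (e F(r w^k) w^(-2k))] summed over the N-th roots of unity [w^k]; the factor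
   [w^(-2k)] is written [w^((N-2)k)] to stay within nat. *)
Definition twisted_avg (F : Cpx -> Cpx) (e : Cpx) (r : R) (N : nat) : R :=
  sumN (fun k => Cre (Cmul (Cmul e (F (sample_point r N k)))
                           (cis (INR k * (INR (N - 2) * root_angle N))))) N.

Lemma twisted_avg_add F G e r N :
  twisted_avg (fun z => Cadd (F z) (G z)) e r N = twisted_avg F e r N + twisted_avg G e r N.
Proof. unfold twisted_avg. rewrite <- sumN_plus. apply sumN_ext. intros k. Cunfold. ring. Qed.

Lemma twisted_avg_C0 e r N : twisted_avg (fun _ => C0) e r N = 0.
Proof.
  unfold twisted_avg. rewrite (sumN_ext _ (fun _ => 0)), sumN_const; [ring|].
  intros k. Cunfold. ring.
Qed.

Lemma twisted_avg_monomial e b r N j :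
  twisted_avg (fun z => Cmul b (Cpow z j)) e r N =
  Cre (Cmul e (Cmul b (RtoC (r ^ j)))) *
    sumN (fun k => cos (INR k * (INR (j + (N - 2)) * root_angle N))) N -
  Cim (Cmul e (Cmul b (RtoC (r ^ j)))) *
    sumN (fun k => sin (INR k * (INR (j + (N - 2)) * root_angle N))) N.
Proof.
  unfold twisted_avg. rewrite <- sumN_lin. apply sumN_ext. intros k.
  unfold sample_point. rewrite Cpow_scale, Cpow_cis.
  replace (INR k * (INR (j + (N - 2)) * root_angle N))
    with (INR j * (INR k * root_angle N) + INR k * (INR (N - 2) * root_angle N))
    by (rewrite plus_INR; ring).
  rewrite cos_plus, sin_plus. unfold cis. Cunfold. ring.
Qed.

Lemma twisted_avg_monomial_eq0 e b r N j : (0 < N)%nat ->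
  (0 < j + (N - 2) < N \/ N < j + (N - 2) < 2 * N)%nat ->
  twisted_avg (fun z => Cmul b (Cpow z j)) e r N = 0.
Proof.
  intros HN Hj. rewrite twisted_avg_monomial.
  destruct (sumN_roots_of_unity_eq0 N (j + (N - 2)) HN (sin_mul_PI_div_neq0 _ _ Hj)) as [-> ->].
  ring.
Qed.

Lemma twisted_avg_monomial_ge e b r N j :
  - (INR N * Cnorm1 (Cmul e (Cmul b (RtoC (r ^ j))))) <= twisted_avg (fun z => Cmul b (Cpow z j)) e r N.
Proof.
  rewrite twisted_avg_monomial, <- sumN_lin, Ropp_mult_distr_r.
  apply sumN_ge_const. intros k.
  set (E := Cmul e (Cmul b (RtoC (r ^ j)))). set (a := INR k * _).
  pose proof (COS_bound a); pose proof (SIN_bound a).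
  pose proof (Rabs_pos (Cre E)); pose proof (Rabs_pos (Cim E)).
  assert (- Rabs (Cre E) <= Cre E * cos a)
    by (destruct (Rcase_abs (Cre E)); [rewrite Rabs_left | rewrite Rabs_right]; nra).
  assert (Cim E * sin a <= Rabs (Cim E))
    by (destruct (Rcase_abs (Cim E)); [rewrite Rabs_left | rewrite Rabs_right]; nra).
  unfold Cnorm1. lra.
Qed.

Lemma twisted_avg_monomial_2 b r N : (2 <= N)%nat ->
  twisted_avg (fun z => Cmul b (Cpow z 2)) (Cconj b) r N = INR N * (r ^ 2 * Cnorm2 b).
Proof.
  intros HN. rewrite twisted_avg_monomial. replace (2 + (N - 2))%nat with N by lia.
  assert (Hk : forall k, INR k * (INR N * root_angle N) = 0 + 2 * INR k * PI)
    by (intros k; rewrite INR_mul_root_angle by lia; ring).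
  rewrite (sumN_ext _ (fun _ => 1)), (sumN_ext (fun k => sin _) (fun _ => 0)), !sumN_const.
  - unfold Cnorm2. Cunfold. ring.
  - intros k. rewrite Hk, sin_period. apply sin_0.
  - intros k. rewrite Hk, cos_period. apply cos_0.
Qed.

Lemma twisted_avg_le F e r N : (forall k, Cmod (F (sample_point r N k)) <= 1) ->
  twisted_avg F e r N <= INR N * Cmod e.
Proof.
  intros HF. apply sumN_le_const. intros k.
  eapply Rle_trans; [apply Cre_le_Cmod|].
  rewrite !Cmod_mul, Cmod_cis. pose proof (Cmod_ge0 e). specialize (HF k). nra.
Qed.

Lemma twisted_avg_psum_cv w c e r N : (forall k, sums c (sample_point r N k) (w (sample_point r N k))) ->
  Un_cv (fun M => twisted_avg (fun z => psum c z M) e r N) (twisted_avg w e r N).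
Proof.
  intros Hw. unfold twisted_avg.
  apply (cv_sumN (fun k M => Cre (Cmul (Cmul e (psum c (sample_point r N k) M)) _))).
  intros k. destruct (Hw k) as [Hre Him].
  set (v := cis _).
  eapply Un_cv_ext;
    [|replace (Cre (Cmul (Cmul e (w (sample_point r N k))) v)) with
        ((Cre e * Cre v - Cim e * Cim v) * Cre (w (sample_point r N k)) +
         - (Cre e * Cim v + Cim e * Cre v) * Cim (w (sample_point r N k))) by (Cunfold; ring);
      exact (cv_lin _ _ _ _ _ _ Hre Him)].
  intros M. Cunfold. ring.
Qed.

Lemma scaled_coef_le e c r rho M0 j : 0 < r -> 0 < rho -> (forall n, Cnorm1 (c n) * rho ^ n <= M0) ->
  Cnorm1 (Cmul e (Cmul (c j) (RtoC (r ^ j)))) <= Cnorm1 e * M0 * (r / rho) ^ j.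
Proof.
  intros Hr Hrho HM.
  eapply Rle_trans; [apply Cnorm1_mul|]. rewrite Rmult_assoc.
  apply Rmult_le_compat_l; [apply Cnorm1_ge0|].
  eapply Rle_trans; [apply Cnorm1_mul|].
  rewrite Cnorm1_RtoC, Rabs_pos_eq by (apply pow_le; lra).
  replace (r ^ j) with (rho ^ j * (r / rho) ^ j)
    by (rewrite <- Rpow_mult_distr; f_equal; field; lra).
  rewrite <- Rmult_assoc. apply Rmult_le_compat_r; [apply pow_le; apply Rlt_le, Rdiv_lt_0_compat; lra | apply HM].
Qed.

(* Only the monomials of degree 2 and >= N + 2 survive the twisted average. *)
Lemma twisted_avg_psum_ge c r rho M0 N k : c O = C0 -> (3 <= N)%nat -> 0 < r -> 0 < rho ->
  (forall n, Cnorm1 (c n) * rho ^ n <= M0) ->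
  INR N * (r ^ 2 * Cnorm2 (c 2%nat))
    - INR N * (Cnorm1 (Cconj (c 2%nat)) * M0 * sumN (geom_tail (r / rho) (N + 2)) (S (2 + k)))
  <= twisted_avg (fun z => psum c z (2 + k)) (Cconj (c 2%nat)) r N.
Proof.
  intros Hc0 HN Hr Hrho HM. set (e := Cconj (c 2%nat)).
  assert (HNp : 0 <= INR N) by apply pos_INR.
  assert (HC : 0 <= Cnorm1 e * M0)
    by (specialize (HM O); pose proof (Cnorm1_ge0 (c O)); pose proof (Cnorm1_ge0 e); simpl in HM; nra).
  assert (Hstep : forall M, twisted_avg (fun z => psum c z (S M)) e r N =
    twisted_avg (fun z => psum c z M) e r N + twisted_avg (fun z => Cmul (c (S M)) (Cpow z (S M))) e r N)
    by (intros M; exact (twisted_avg_add (fun z => psum c z M) _ e r N)).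
  assert (Hg : forall j, 0 <= geom_tail (r / rho) (N + 2) j).
  { intros j. unfold geom_tail. destruct (Nat.leb _ _); [apply pow_le, Rlt_le, Rdiv_lt_0_compat|]; lra. }
  induction k.
  - simpl Nat.add. rewrite !Hstep.
    replace (fun z => psum c z 0) with (fun _ : Cpx => C0) by (simpl; rewrite Hc0; reflexivity).
    rewrite twisted_avg_C0, (twisted_avg_monomial_eq0 _ _ _ _ 1) by lia.
    unfold e. rewrite twisted_avg_monomial_2 by lia.
    fold e. assert (0 <= sumN (geom_tail (r / rho) (N + 2)) 3)
      by (simpl; pose proof (Hg O); pose proof (Hg 1%nat); pose proof (Hg 2%nat); lra).
    assert (0 <= Cnorm1 e * M0 * sumN (geom_tail (r / rho) (N + 2)) 3) by (apply Rmult_le_pos; auto).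
    nra.
  - replace (2 + S k)%nat with (S (2 + k)) by lia. rewrite Hstep.
    change (sumN (geom_tail (r / rho) (N + 2)) (S (S (2 + k))))
      with (sumN (geom_tail (r / rho) (N + 2)) (S (2 + k)) + geom_tail (r / rho) (N + 2) (S (2 + k))).
    assert (- (INR N * (Cnorm1 e * M0 * geom_tail (r / rho) (N + 2) (S (2 + k))))
            <= twisted_avg (fun z => Cmul (c (S (2 + k))) (Cpow z (S (2 + k)))) e r N).
    { unfold geom_tail. destruct (Nat.leb_spec (N + 2) (S (2 + k))).
      - eapply Rle_trans; [|apply twisted_avg_monomial_ge].
        apply Ropp_le_contravar, Rmult_le_compat_l; auto. apply scaled_coef_le; auto.
      - rewrite twisted_avg_monomial_eq0 by lia. lra. }
    nra.
Qed.

Lemma le_of_le_add_geometric a b C x n0 : 0 <= x < 1 ->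
  (forall n, (n0 <= n)%nat -> a <= b + C * x ^ n) -> a <= b.
Proof.
  intros Hx H. apply Rnot_lt_le. intros Hab.
  destruct (pow_lt_1_zero x ltac:(rewrite Rabs_pos_eq; lra) ((a - b) / (Rabs C + 1)))
    as [N HN]; [apply Rdiv_lt_0_compat; pose proof (Rabs_pos C); lra|].
  specialize (HN (max N n0) (Nat.le_max_l _ _)). specialize (H (max N n0) (Nat.le_max_r _ _)).
  set (y := x ^ max N n0) in *.
  assert (Hy : 0 <= y) by (apply pow_le; lra). rewrite Rabs_pos_eq in HN by lra.
  assert (y * (Rabs C + 1) < a - b).
  { replace (a - b) with ((a - b) / (Rabs C + 1) * (Rabs C + 1)) by (field; pose proof (Rabs_pos C); lra).
    apply Rmult_lt_compat_r; [pose proof (Rabs_pos C) |]; lra. }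
  pose proof (Rle_abs C). pose proof (Rabs_pos C). nra.
Qed.

Lemma le_of_forall_sqr_mul_le a b : 0 <= b -> (forall r, 0 < r < 1 -> r ^ 2 * a <= b) -> a <= b.
Proof.
  intros Hb H. apply Rnot_lt_le. intros Hab.
  set (q := b / a).
  assert (Hq : 0 <= q < 1).
  { unfold q. split; [apply Rmult_le_pos; [lra | apply Rlt_le, Rinv_0_lt_compat; lra]|].
    apply (Rmult_lt_reg_r a); [lra|]. unfold Rdiv. rewrite Rmult_assoc, Rinv_l by lra. lra. }
  specialize (H ((1 + q) / 2) ltac:(lra)).
  assert (q < ((1 + q) / 2) ^ 2) by (simpl; nra).
  assert (q * a = b) by (unfold q; field; lra).
  nra.
Qed.

Lemma Schwarz_avg_bound w c r rho M0 N :
  repr w c -> c O = C0 -> (forall z, in_U z -> in_U (w z)) -> 0 < r < rho -> rho < 1 ->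
  (forall n, Cnorm1 (c n) * rho ^ n <= M0) -> (3 <= N)%nat ->
  r ^ 2 * Cnorm2 (c 2%nat) <=
  Cmod (Cconj (c 2%nat)) + Cnorm1 (Cconj (c 2%nat)) * M0 / (1 - r / rho) * (r / rho) ^ (N + 2).
Proof.
  intros Hw Hc0 Hmap Hr Hrho HM HN.
  set (e := Cconj (c 2%nat)). set (x := r / rho).
  assert (HNp : 0 < INR N) by (apply lt_0_INR; lia).
  assert (Hx : 0 <= x < 1).
  { unfold x. split; [apply Rlt_le, Rdiv_lt_0_compat; lra|].
    apply (Rmult_lt_reg_r rho); [lra|]. unfold Rdiv. rewrite Rmult_assoc, Rinv_l by lra. lra. }
  assert (HC : 0 <= Cnorm1 e * M0)
    by (specialize (HM O); pose proof (Cnorm1_ge0 (c O)); pose proof (Cnorm1_ge0 e); simpl in HM; nra).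
  assert (HzU : forall k, in_U (sample_point r N k)).
  { intros k. unfold in_U, sample_point. rewrite Cmod_mul, Cmod_RtoC, Cmod_cis, Rabs_pos_eq; lra. }
  pose proof (twisted_avg_psum_cv w c e r N (fun k => Hw _ (HzU k))) as Hcv.
  assert (Hup : twisted_avg w e r N <= INR N * Cmod e)
    by (apply twisted_avg_le; intros k; apply Rlt_le, Hmap, HzU).
  assert (Hlow : INR N * (r ^ 2 * Cnorm2 (c 2%nat)) - INR N * (Cnorm1 e * M0 * (x ^ (N + 2) / (1 - x)))
                 <= twisted_avg w e r N).
  { apply (cv_ge_eventually _ _ _ 2 Hcv). intros M HM2. replace M with (2 + (M - 2))%nat by lia.
    eapply Rle_trans; [|apply twisted_avg_psum_ge; auto; lra].
    pose proof (sumN_geom_tail_le x (N + 2) (S (2 + (M - 2))) Hx).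
    apply Rplus_le_compat_l, Ropp_le_contravar, Rmult_le_compat_l; [lra|].
    apply Rmult_le_compat_l; auto. }
  replace (Cnorm1 e * M0 / (1 - x) * x ^ (N + 2)) with (Cnorm1 e * M0 * (x ^ (N + 2) / (1 - x)))
    by (field; lra).
  apply (Rmult_le_reg_l (INR N)); lra.
Qed.

Lemma Schwarz_coef2_le w c : repr w c -> c O = C0 -> (forall z, in_U z -> in_U (w z)) ->
  Cnorm2 (c 2%nat) <= 1.
Proof.
  intros Hw Hc0 Hmap. set (n2 := Cnorm2 (c 2%nat)).
  assert (He : Cmod (Cconj (c 2%nat)) = sqrt n2) by (unfold Cmod, n2, Cnorm2; Cunfold; f_equal; ring).
  assert (Hn2 : 0 <= n2) by apply Cnorm2_ge0.
  assert (Hle : n2 <= sqrt n2).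
  { apply le_of_forall_sqr_mul_le; [apply sqrt_pos|]. intros r Hr.
    set (rho := (1 + r) / 2).
    destruct (coef_growth_bound w c rho Hw) as [M0 HM]; [unfold rho; lra|].
    apply (le_of_le_add_geometric _ _ (Cnorm1 (Cconj (c 2%nat)) * M0 / (1 - r / rho)) (r / rho) 5).
    - split; [apply Rlt_le, Rdiv_lt_0_compat; unfold rho; lra|].
      apply (Rmult_lt_reg_r rho); [unfold rho; lra|].
      unfold Rdiv. rewrite Rmult_assoc, Rinv_l by (unfold rho; lra). unfold rho; lra.
    - intros n Hn. replace n with (n - 2 + 2)%nat by lia. rewrite <- He.
      apply (Schwarz_avg_bound w); auto; unfold rho; try lra; lia. }
  assert (Hss : sqrt n2 * sqrt n2 = n2) by (apply sqrt_sqrt; lra).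
  pose proof (sqrt_pos n2). nra.
Qed.

(** * Coefficient relations *)

Lemma repr_at_C0 F a : repr F a -> F C0 = a O.
Proof.
  intros H. destruct (H C0 in_U_C0) as [A B].
  assert (Hp : forall N, psum a C0 N = a O) by (induction N; simpl; [|rewrite IHN]; [reflexivity | Cring]).
  apply Cext; eapply UL_sequence; eauto; eapply Un_cv_ext; try apply cv_const; intros n; rewrite Hp; reflexivity.
Qed.

Lemma psum_shift a z N : a O = C0 -> psum a z (S N) = Cmul z (psum (shift a) z N).
Proof.
  intros H. induction N.
  - simpl. rewrite H. unfold shift. Cring.
  - change (psum a z (S (S N))) with (Cadd (psum a z (S N)) (Cmul (a (S (S N))) (Cpow z (S (S N))))).
    rewrite IHN. simpl. unfold shift. Cring.
Qed.

Lemma repr_eq_mul_shift F a H : repr F a -> a O = C0 -> repr H (shift a) ->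
  forall z, in_U z -> F z = Cmul z (H z).
Proof.
  intros HF Ha HH z Hz. destruct (HF z Hz) as [A B]. destruct (HH z Hz) as [C D].
  pose proof (CV_shift' _ 1 _ A) as A'. pose proof (CV_shift' _ 1 _ B) as B'.
  apply Cext; eapply UL_sequence; [exact A' | | exact B' |].
  - replace (Cre (Cmul z (H z))) with (Cre z * Cre (H z) + - Cim z * Cim (H z)) by (Cunfold; ring).
    eapply Un_cv_ext; [|apply (cv_lin _ _ _ _ _ _ C D)].
    intros n. rewrite Nat.add_1_r, psum_shift by auto. Cunfold. ring.
  - replace (Cim (Cmul z (H z))) with (Cre z * Cim (H z) + Cim z * Cre (H z)) by (Cunfold; ring).
    eapply Un_cv_ext; [|apply (cv_lin _ _ _ _ _ _ D C)].
    intros n. rewrite Nat.add_1_r, psum_shift by auto. Cunfold. ring.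
Qed.

(* Comparing second-order expansions of f' = (zf'/f) (f/z) with zf'/f = phi o w. *)
Lemma starlike_coefs phi B a : repr phi B -> B O = Defs.C1 -> a 1%nat = Defs.C1 ->
  starlike_subord a phi -> exists c1 c2, Cnorm2 c2 <= 1 /\
  a 2%nat = Cmul (B 1%nat) c1 /\
  Cmul (RtoC 2) (a 3%nat) =
    Cadd (Cmul (Cmul (B 1%nat) c1) (a 2%nat)) (Cadd (Cmul (B 1%nat) c2) (Cmul (B 2%nat) (Cmul c1 c1))).
Proof.
  intros Hphi HB0 Ha1 [fp [h [Hfp [Hh [w [c [Hw [Hc0 [Hmap Heq]]]]]]]]].
  exists (c 1%nat), (c 2%nat). split; [eapply Schwarz_coef2_le; eauto|].
  pose proof (Cjet2_repr h _ Hh) as Jh. unfold shift in Jh. rewrite Ha1 in Jh.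
  pose proof (Cjet2_repr w _ Hw) as Jw. rewrite Hc0 in Jw.
  pose proof (Cjet2_comp phi B _ _ _ Hphi Jw) as Jpw. rewrite HB0 in Jpw.
  assert (Hnear : exists d, 0 < d /\ forall t, 0 < Rabs t < d ->
                   fp (RtoC t) = Cmul (phi (w (RtoC t))) (h (RtoC t))).
  { destruct Jh as [Jhr _]. destruct (jet2_nonzero_near _ _ _ _ Jhr) as [d [Hd Hnz]]; [simpl; lra|].
    exists (Rmin d 1). split; [apply Rmin_glb_lt; lra|].
    intros t Ht. pose proof (Rmin_l d 1); pose proof (Rmin_r d 1).
    assert (HU : in_U (RtoC t)) by (apply in_U_RtoC; lra).
    rewrite <- (Heq _ HU), Cdiv_mul; auto.
    specialize (Hnz t ltac:(lra)). unfold Cnorm2. intros Hh0. apply Hnz. nra. }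
  pose proof (Cjet2_eq_near _ _ _ _ _ Hnear (Cjet2_mul _ _ _ _ _ _ _ _ Jpw Jh)) as Jfp.
  destruct (Cjet2_unique _ _ _ _ _ _ _ (Cjet2_repr fp _ Hfp) Jfp) as [_ [E1 E2]].
  unfold dcoef in E1, E2. simpl INR in E1, E2.
  Csplit E1. Csplit E2.
  assert (A2 : a 2%nat = Cmul (B 1%nat) (c 1%nat)) by (apply Cext; Cunfold; lra).
  split; auto. apply Cext; Cunfold; lra.
Qed.

Lemma inverse_coef0 f a g b r0 : repr f a -> a O = C0 -> univalent_U f -> repr g b -> 0 < r0 ->
  (forall w, Cmod w < r0 -> in_U (g w) /\ f (g w) = w) -> b O = C0.
Proof.
  intros Hf Ha0 Hfu Hg Hr0 Hinv.
  destruct (Hinv C0) as [HU HE]; [rewrite Cmod_C0; lra|].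
  rewrite <- (repr_at_C0 g b Hg). apply Hfu; auto; [apply in_U_C0|].
  rewrite HE, (repr_at_C0 f a Hf). auto.
Qed.

(* Writing f(z) = z hf(z) and g(w) = w hg(w), the identity f(g(t)) = t becomes hg(t) hf(g(t)) = 1. *)
Lemma inverse_coefs f a g b hf hg r0 :
  repr f a -> a O = C0 -> a 1%nat = Defs.C1 -> repr hf (shift a) ->
  repr g b -> b O = C0 -> repr hg (shift b) -> 0 < r0 ->
  (forall w, Cmod w < r0 -> in_U (g w) /\ f (g w) = w) ->
  b 1%nat = Defs.C1 /\ b 2%nat = Copp (a 2%nat) /\
  b 3%nat = Csub (Cmul (RtoC 2) (Cmul (a 2%nat) (a 2%nat))) (a 3%nat).
Proof.
  intros Hf Ha0 Ha1 Hhf Hg Hb0 Hhg Hr0 Hinv.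
  pose proof (Cjet2_repr g b Hg) as Jg. rewrite Hb0 in Jg.
  pose proof (Cjet2_mul _ _ _ _ _ _ _ _ (Cjet2_repr hg _ Hhg) (Cjet2_comp hf _ _ _ _ Hhf Jg)) as Jp.
  assert (Hnear : exists d, 0 < d /\ forall t, 0 < Rabs t < d ->
                  Cmul (hg (RtoC t)) (hf (g (RtoC t))) = Defs.C1).
  { exists (Rmin r0 1). split; [apply Rmin_glb_lt; lra|].
    intros t Ht. pose proof (Rmin_l r0 1); pose proof (Rmin_r r0 1).
    assert (HU : in_U (RtoC t)) by (apply in_U_RtoC; lra).
    destruct (Hinv (RtoC t)) as [HgU HE]; [rewrite Cmod_RtoC; lra|].
    set (G := g (RtoC t)) in *.
    rewrite (repr_eq_mul_shift f a hf Hf Ha0 Hhf _ HgU) in HE.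
    set (X := hf G) in *.
    rewrite (repr_eq_mul_shift g b hg Hg Hb0 Hhg _ HU : G = _) in HE.
    assert (t <> 0) by (intros ->; rewrite Rabs_R0 in Ht; lra).
    Csplit HE. apply Cext; apply (Rmult_eq_reg_l t); auto; Cunfold; lra. }
  pose proof (Cjet2_eq_near _ _ _ _ _ Hnear (Cjet2_const Defs.C1)) as Jc.
  destruct (Cjet2_unique _ _ _ _ _ _ _ Jp Jc) as [E0 [E1 E2]].
  unfold shift in E0, E1, E2. rewrite Ha1 in E0, E1, E2.
  Csplit E0.
  assert (Hb1 : b 1%nat = Defs.C1) by (apply Cext; Cunfold; lra).
  rewrite Hb1 in E1, E2. Csplit E1.
  assert (Hb2 : b 2%nat = Copp (a 2%nat)) by (apply Cext; Cunfold; lra).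
  rewrite Hb2 in E2. Csplit E2.
  repeat split; auto. apply Cext; Cunfold; lra.
Qed.

Lemma Fekete_Szego_bound_of_coefs beta B2 a2 a3 c1 c2 d1 d2 : 0 < beta ->
  Cnorm2 c2 <= 1 -> Cnorm2 d2 <= 1 -> a2 = Cmul (RtoC beta) c1 ->
  Cmul (RtoC 2) a3 =
    Cadd (Cmul (Cmul (RtoC beta) c1) a2) (Cadd (Cmul (RtoC beta) c2) (Cmul B2 (Cmul c1 c1))) ->
  Copp a2 = Cmul (RtoC beta) d1 ->
  Cmul (RtoC 2) (Csub (Cmul (RtoC 2) (Cmul a2 a2)) a3) =
    Cadd (Cmul (Cmul (RtoC beta) d1) (Copp a2)) (Cadd (Cmul (RtoC beta) d2) (Cmul B2 (Cmul d1 d1))) ->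
  Cmod (Csub a3 (Cmul a2 a2)) <= beta / 2.
Proof.
  intros Hbeta Hc2 Hd2 Ea2 Ea3 Eb2 Eb3.
  assert (Hd1 : d1 = Copp c1).
  { subst a2. Csplit Eb2. apply Cext; Cunfold; apply (Rmult_eq_reg_l beta); lra. }
  subst d1 a2.
  replace (Csub a3 _) with (Cmul (RtoC (beta / 4)) (Csub c2 d2))
    by (Csplit Ea3; Csplit Eb3; apply Cext; Cunfold; lra).
  rewrite Cmod_mul, Cmod_RtoC, Rabs_pos_eq by lra.
  assert (Cmod (Csub c2 d2) <= 2).
  { unfold Cmod. rewrite <- (sqrt_square 2) by lra. apply sqrt_le_1; [apply Cnorm2_ge0 | lra|].
    unfold Cnorm2 in *. Cunfold.
    pose proof (pow2_ge_0 (Cre c2 + Cre d2)); pose proof (pow2_ge_0 (Cim c2 + Cim d2)). nra. }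
  nra.
Qed.

Theorem corollary3p11 (phi : Cpx -> Cpx) (B : nat -> Cpx)
  (f : Cpx -> Cpx) (a : nat -> Cpx) :
  MaMinda phi B -> bi_starlike f a phi ->
  Cmod (Csub (a 3%nat) (Cmul (a 2%nat) (a 2%nat))) <= Cre (B 1%nat) / 2.
Proof.
  intros [Hphi [_ [_ [HB0 [HBim [HB1 _]]]]]]
         [Hf [Ha0 [Ha1 [Hfu [Sa [g [b [Hg [_ [[r0 [Hr0 Hinv]] Sb]]]]]]]]]].
  pose proof (inverse_coef0 f a g b r0 Hf Ha0 Hfu Hg Hr0 Hinv) as Hb0.
  destruct (starlike_coefs phi B a Hphi HB0 Ha1 Sa) as [c1 [c2 [Hc2 [Ea2 Ea3]]]].
  pose proof Sa as [_ [hf [_ [Hhf _]]]]. pose proof Sb as [_ [hg [_ [Hhg _]]]].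
  destruct (inverse_coefs f a g b hf hg r0 Hf Ha0 Ha1 Hhf Hg Hb0 Hhg Hr0 Hinv) as [Hb1 [Hb2 Hb3]].
  destruct (starlike_coefs phi B b Hphi HB0 Hb1 Sb) as [d1 [d2 [Hd2 [Eb2 Eb3]]]].
  rewrite Hb2 in Eb2, Eb3. rewrite Hb3 in Eb3.
  assert (HB1r : B 1%nat = RtoC (Cre (B 1%nat))) by (apply Cext; simpl; auto).
  rewrite HB1r in Ea2, Ea3, Eb2, Eb3.
  exact (Fekete_Szego_bound_of_coefs _ (B 2%nat) _ _ c1 c2 d1 d2 HB1 Hc2 Hd2 Ea2 Ea3 Eb2 Eb3).
Qed.
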